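(* Let $k\ge 2$ be an integer and $i=4k-1$. Then for every $n\in\{2,3,\dots,k\}$, the numerical semigroup $S(i)$ admits a factorization into irreducible numerical semigroups of length $n$. Moreover, if $k\ge 3$, then $S(4k-1)$ admits at least two distinct factorizations of length $k$.
   Context: $\mathbb{N}$ denotes the non-negative integers. A numerical semigroup is a submonoid of $(\mathbb{N},+)$ with finite complement. A numerical semigroup is irreducible if it cannot be written as the intersection of two numerical semigroups properly containing it. For an odd integer $j\ge 3$, $T(j)=\{0,\tfrac{j+1}{2},\tfrac{j+1}{2}+1,\dots,j-1\}\cup\{n\in\mathbb{Z}:n\ge j+1\}$. For odd $i\ge5$, $S(i)=\langle 2,i\rangle\cap T(i)$, where $\langle 2,i\rangle=\{2x+iy:x,y\in\mathbb{N}\}$. Given a numerical semigroup $S$ and irreducible numerical semigroups $S_1,\dots,S_n$, the expression $S_1\cap\dots\cap S_n$ is a factorization of $S$ (of length $n$) if $S=S_1\cap\dots\cap S_n$ and $S\neq\bigcap_{j\in J}S_j$ for every nonempty proper subset $J\subsetneq\{1,\dots,n\}$. Two factorizations are distinct if their sets of factors $\{S_1,\dots,S_n\}$ differ. *)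

From Stdlib Require Import Arith Lia.

Definition nset := nat -> Prop.

Definition seteq (A B : nset) : Prop := forall x, A x <-> B x.

Definition subset (A B : nset) : Prop := forall x, A x -> B x.

Definition proper_subset (A B : nset) : Prop :=
  subset A B /\ exists x, B x /\ ~ A x.

Definition is_numsg (S : nset) : Prop :=
  S 0 /\ (forall x y, S x -> S y -> S (x + y)) /\
  exists N, forall x, N <= x -> S x.

Definition irreducible (S : nset) : Prop :=
  is_numsg S /\
  ~ (exists S1 S2, is_numsg S1 /\ is_numsg S2 /\
       proper_subset S S1 /\ proper_subset S S2 /\
       seteq S (fun x => S1 x /\ S2 x)).

Definition T (j : nat) : nset :=
  fun x => x = 0 \/ ((j + 1) / 2 <= x /\ x <= j - 1) \/ j + 1 <= x.

Definition gen2 (i : nat) : nset :=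
  fun x => exists a b, x = 2 * a + i * b.

Definition Ssg (i : nat) : nset := fun x => gen2 i x /\ T i x.

Definition is_factorization (S : nset) (n : nat) (F : nat -> nset) : Prop :=
  (forall j, j < n -> irreducible (F j)) /\
  seteq S (fun x => forall j, j < n -> F j x) /\
  (forall J : nat -> Prop,
      (exists j, j < n /\ J j) -> (exists j, j < n /\ ~ J j) ->
      ~ seteq S (fun x => forall j, j < n -> J j -> F j x)).

Definition distinct_factors (n : nat) (F : nat -> nset) (m : nat) (G : nat -> nset) : Prop :=
  (exists j, j < n /\ forall l, l < m -> ~ seteq (F j) (G l)) \/
  (exists l, l < m /\ forall j, j < n -> ~ seteq (G l) (F j)).

(* S(4k-1) = {0} ∪ {even x >= 2k} ∪ [4k+1, ∞).  For every m the semigroup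
   K_m = {0} ∪ [m+1, ∞) \ {2m+1} is irreducible, since every gap x < 2m+1
   has 2m+1-x in K_m, and K_m removes exactly the odd number 2m+1 from
   K_{2k-1}.  So S(4k-1) is the intersection of K_{2k-1}, ..., K_{2k-n+1}
   with any irreducible oversemigroup removing precisely the odd numbers
   2k+1, ..., 4k-2n+1 among 2k+1, ..., 4k-1: the symmetric semigroup
   <2, 4k-2n+3>, or K_k when n = k.  Each factor is the only one missing a
   certain gap of S(4k-1), so no factor can be dropped. *)
From Stdlib Require Import Arith Lia.

Lemma irreducible_of_paired_gaps (S : nset) (f : nat) :
  is_numsg S -> ~ S f ->
  (forall x, ~ S x -> x <= f /\ (S (f - x) \/ x + x = f)) ->
  irreducible S.
Proof.
  intros HS Hf Hgaps. split; [exact HS |].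
  assert (Hover : forall S', is_numsg S' -> proper_subset S S' -> S' f).
  { intros S' [_ [Hadd _]] [HSS' [y [HS'y HSy]]].
    destruct (Hgaps y HSy) as [Hyf [Hfy | Hfy]].
    - replace f with (y + (f - y)) by lia. apply Hadd; auto.
    - rewrite <- Hfy. auto. }
  intros (S1 & S2 & H1 & H2 & Hp1 & Hp2 & Heq).
  apply Hf, Heq. split; [apply Hover | apply Hover]; assumption.
Qed.

Lemma irredundant_of_witnesses (S : nset) (n : nat) (F : nat -> nset) :
  (forall j0, j0 < n -> exists p, ~ S p /\ forall j, j < n -> j <> j0 -> F j p) ->
  forall J : nat -> Prop, (exists j, j < n /\ J j) -> (exists j, j < n /\ ~ J j) ->
  ~ seteq S (fun x => forall j, j < n -> J j -> F j x).
Proof.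
  intros Hwit J _ [j0 [Hj0 HJ0]] Heq.
  destruct (Hwit j0 Hj0) as [p [HSp Hp]].
  apply HSp, Heq. intros j Hj HJ. apply Hp; [exact Hj |].
  intros ->. contradiction.
Qed.

Lemma is_factorization_seteq (S S' : nset) (n : nat) (F : nat -> nset) :
  seteq S S' -> is_factorization S n F -> is_factorization S' n F.
Proof.
  intros HSS' [Hirr [Hint Hmin]]. split; [exact Hirr | split].
  - intros x. rewrite <- (HSS' x). apply Hint.
  - intros J HJ HnJ Heq. apply (Hmin J HJ HnJ). intros x. rewrite (HSS' x). apply Heq.
Qed.

Definition punctured_halfline (m : nat) : nset :=
  fun x => x = 0 \/ (m + 1 <= x /\ x <> 2 * m + 1).

Definition evens_or_above (m : nat) : nset :=
  fun x => Nat.Even x \/ 2 * m + 1 < x.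

Lemma punctured_halfline_irreducible (m : nat) : irreducible (punctured_halfline m).
Proof.
  unfold punctured_halfline.
  apply (irreducible_of_paired_gaps _ (2 * m + 1)); [repeat split | lia | lia].
  - lia.
  - intros x y Hx Hy. lia.
  - exists (2 * m + 2). lia.
Qed.

Lemma evens_or_above_irreducible (m : nat) : irreducible (evens_or_above m).
Proof.
  unfold evens_or_above.
  apply (irreducible_of_paired_gaps _ (2 * m + 1)); [repeat split | | ].
  - left. exists 0. reflexivity.
  - intros x y [[a ->] | Hx] [[b ->] | Hy]; [left; exists (a + b) | right | right | right]; lia.
  - exists (2 * m + 2). intros x Hx. right. lia.
  - intros [[a Ha] | H]; lia.
  - intros x Hx. split.
    + destruct (le_lt_dec x (2 * m + 1)); [assumption |].
      exfalso. apply Hx. right. lia.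
    + left. left. destruct (Nat.Even_or_Odd x) as [Hev | [a Ha]].
      * exfalso. apply Hx. left. exact Hev.
      * exists (m - a). lia.
Qed.

Definition S_explicit (k : nat) : nset :=
  fun x => x = 0 \/ (2 * k <= x /\ Nat.Even x) \/ 4 * k + 1 <= x.

Lemma Ssg_explicit (k : nat) : 1 <= k -> seteq (Ssg (4 * k - 1)) (S_explicit k).
Proof.
  intros Hk x. unfold Ssg, gen2, T, S_explicit.
  replace ((4 * k - 1 + 1) / 2) with (2 * k)
    by (replace (4 * k - 1 + 1) with (2 * k * 2) by lia; symmetry; apply Nat.div_mul; lia).
  split.
  - intros [[a [[| b] ->]] HT].
    + destruct HT as [H | [H | H]]; [left | right; left; split; [| exists a] ..]; lia.
    + destruct (Nat.eq_dec (2 * a + (4 * k - 1) * S b) (4 * k)) as [H4k | H4k].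
      * right. left. split; [lia | exists (2 * k); lia].
      * right. right. nia.
  - intros [-> | [[H2k [a ->]] | H4k]].
    + split; [exists 0, 0 | left]; lia.
    + split; [exists a, 0 | right]; lia.
    + split; [| right; right; lia].
      destruct (Nat.Even_or_Odd x) as [[a ->] | [a ->]];
        [exists a, 0 | exists (a - (2 * k - 1)), 1]; lia.
Qed.

Lemma S_explicit_of_odd_gaps (k x : nat) :
  punctured_halfline (2 * k - 1) x ->
  (forall a, x = 2 * a + 1 -> k <= a < 2 * k -> False) ->
  S_explicit k x.
Proof.
  unfold punctured_halfline, S_explicit. intros Hx Hodd.
  destruct (Nat.Even_or_Odd x) as [Hev | [a Ha]].
  - destruct Hx as [Hx | Hx]; [left; exact Hx | right; left; split; [lia | exact Hev]].
  - destruct Hx as [Hx | Hx]; [left; exact Hx |].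
    right. right. destruct (le_lt_dec (4 * k + 1) x); [assumption |].
    exfalso. apply (Hodd a Ha). lia.
Qed.

Definition factor_family (k n : nat) (L : nset) (j : nat) : nset :=
  if j <? n - 1 then punctured_halfline (2 * k - 1 - j) else L.

Section LastFactor.

Variables (k n : nat) (L : nset).
Hypotheses (Hn : 2 <= n) (Hnk : n <= k).
Hypotheses (HLirr : irreducible L) (HSL : subset (S_explicit k) L).
Hypothesis HLodd : forall a, k <= a < 2 * k -> (L (2 * a + 1) <-> 2 * k - n < a).

Lemma factor_family_irreducible (j : nat) : irreducible (factor_family k n L j).
Proof.
  unfold factor_family. destruct (j <? n - 1);
    [apply punctured_halfline_irreducible | exact HLirr].
Qed.

Lemma S_explicit_sub_factor_family (j x : nat) :
  S_explicit k x -> factor_family k n L j x.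
Proof.
  intros Hx. unfold factor_family. destruct (Nat.ltb_spec j (n - 1)); [| auto].
  unfold S_explicit, punctured_halfline in *.
  destruct Hx as [Hx | [[Hx [a ->]] | Hx]]; lia.
Qed.

Lemma factor_family_inter_sub_S_explicit (x : nat) :
  (forall j, j < n -> factor_family k n L j x) -> S_explicit k x.
Proof.
  intros Hall. apply S_explicit_of_odd_gaps.
  { specialize (Hall 0 ltac:(lia)). unfold factor_family in Hall.
    destruct (Nat.ltb_spec 0 (n - 1)); [| lia].
    rewrite Nat.sub_0_r in Hall. exact Hall. }
  intros a -> Ha. destruct (le_lt_dec a (2 * k - n)) as [Hlast | Hmid].
  - specialize (Hall (n - 1) ltac:(lia)). unfold factor_family in Hall.
    destruct (Nat.ltb_spec (n - 1) (n - 1)); [lia |].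
    apply HLodd in Hall; lia.
  - specialize (Hall (2 * k - 1 - a) ltac:(lia)). unfold factor_family in Hall.
    destruct (Nat.ltb_spec (2 * k - 1 - a) (n - 1)); [| lia].
    unfold punctured_halfline in Hall. lia.
Qed.

(* Factor j < n-1 is the only one missing 4k-1-2j, the last one the only
   one missing 4k-2n+1. *)
Lemma factor_family_witnesses (j0 : nat) : j0 < n ->
  exists p, ~ S_explicit k p /\
            forall j, j < n -> j <> j0 -> factor_family k n L j p.
Proof.
  intros Hj0.
  assert (Hgap : forall a, k <= a < 2 * k -> ~ S_explicit k (2 * a + 1)).
  { unfold S_explicit. intros a Ha [H | [[_ [b Hb]] | H]]; lia. }
  unfold factor_family. destruct (Nat.ltb_spec j0 (n - 1)).
  - exists (2 * (2 * k - 1 - j0) + 1). split; [apply Hgap; lia |].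
    intros j Hj Hne. destruct (Nat.ltb_spec j (n - 1)).
    + unfold punctured_halfline. lia.
    + apply HLodd; lia.
  - exists (2 * (2 * k - n) + 1). split; [apply Hgap; lia |].
    intros j Hj Hne. destruct (Nat.ltb_spec j (n - 1)); [| lia].
    unfold punctured_halfline. lia.
Qed.

Lemma factor_family_factorization :
  is_factorization (Ssg (4 * k - 1)) n (factor_family k n L).
Proof.
  apply (is_factorization_seteq (S_explicit k)).
  { intros x. symmetry. apply Ssg_explicit. lia. }
  split; [| split].
  - intros j _. apply factor_family_irreducible.
  - intros x. split.
    + intros Hx j _. apply S_explicit_sub_factor_family, Hx.
    + apply factor_family_inter_sub_S_explicit.
  - apply irredundant_of_witnesses, factor_family_witnesses.
Qed.

End LastFactor.

Lemma factorization_evens_last (k n : nat) : 2 <= n -> n <= k ->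
  is_factorization (Ssg (4 * k - 1)) n (factor_family k n (evens_or_above (2 * k - n))).
Proof.
  intros Hn Hnk. apply factor_family_factorization; try assumption.
  - apply evens_or_above_irreducible.
  - unfold S_explicit, evens_or_above. intros x [-> | [[_ Hev] | Hx]].
    + left. exists 0. reflexivity.
    + left. exact Hev.
    + right. lia.
  - intros a Ha. unfold evens_or_above. split.
    + intros [[b Hb] | H]; lia.
    + intros H. right. lia.
Qed.

Lemma factorization_punctured_last (k : nat) : 2 <= k ->
  is_factorization (Ssg (4 * k - 1)) k (factor_family k k (punctured_halfline k)).
Proof.
  intros Hk. apply factor_family_factorization; try lia.
  - apply punctured_halfline_irreducible.
  - unfold S_explicit, punctured_halfline. intros x [-> | [[Hx [a ->]] | Hx]]; lia.
  - intros a Ha. unfold punctured_halfline. lia.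
Qed.

Theorem mainTheorem4 (k : nat) (hk : 2 <= k) :
  (forall n, 2 <= n -> n <= k ->
     exists F, is_factorization (Ssg (4 * k - 1)) n F) /\
  (3 <= k ->
     exists F G, is_factorization (Ssg (4 * k - 1)) k F /\
                 is_factorization (Ssg (4 * k - 1)) k G /\
                 distinct_factors k F k G).
Proof.
  split.
  - intros n Hn Hnk. eexists. apply factorization_evens_last; assumption.
  - intros _. do 2 eexists.
    split; [apply factorization_evens_last; lia |].
    split; [apply factorization_punctured_last; exact hk |].
    left. exists (k - 1). split; [lia |]. intros l Hl Heq.
    assert (H2 : factor_family k k (evens_or_above (2 * k - k)) (k - 1) 2).
    { unfold factor_family. rewrite (proj2 (Nat.ltb_ge _ _)) by lia.
      left. exists 1. reflexivity. }
    apply Heq in H2. unfold factor_family, punctured_halfline in H2.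
    destruct (l <? k - 1); lia.
Qed.
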